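(* Let $w$ be a reduced word in $x,y$ of length $\ell$, written $w=w_\ell\cdots w_1$ with each $w_i\in\{x,x^{-1},y,y^{-1}\}$, and let $n,m\in\mathbb{N}$ and $p$ prime. For $x,y\in\mathrm{GL}_n(\mathbb{F}_p)$ and $v_{1,0},\dots,v_{m,0}\in\mathbb{F}_p^n$ define $v_{i,j}=w_j(x,y)\,v_{i,j-1}$ for $1\le j\le\ell$ (so $v_{i,j}=w^{(j)}(x,y)v_{i,0}$ with $w^{(j)}=w_j\cdots w_1$). Let $\prec$ be the lexicographic order on $\{1,\dots,m\}\times\{0,\dots,\ell\}$, let $Z_{i,j}=\mathrm{Span}\{v_{i',j'}:(i',j')\prec(i,j)\}$, and let $$S_{w,m}=\{(x,y,v_{1,0},\dots,v_{m,0})\in\mathrm{GL}_n(\mathbb{F}_p)^2\times\mathbb{F}_p^{nm}:\ \forall i,\ v_{i,0}\notin Z_{i,0}\text{ and }v_{i,\ell}=v_{i,0}\}.$$ If $n\geq2m\ell$, then $|S_{w,m}|<\ell^m p^{2n^2+m^2\ell}$. *)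

From HB Require Import structures.
From mathcomp Require Import all_boot all_order all_algebra.
Set Implicit Arguments. Unset Strict Implicit. Unset Printing Implicit Defensive.
Import GRing.Theory.
Local Open Scope ring_scope.

(* A letter of a word in the free group on x, y:
   (false, false) = x, (false, true) = x^-1, (true, false) = y, (true, true) = y^-1. *)
Definition letter := (bool * bool)%type.

Definition letter_mx (F : fieldType) (n : nat) (x y : 'M[F]_n) (a : letter) : 'M[F]_n :=
  let M := if a.1 then y else x in if a.2 then invmx M else M.

Definition inv_letter (a b : letter) : bool := (a.1 == b.1) && (a.2 != b.2).

(* A word w = w_l ... w_1 is stored as the sequence [:: w_1; w_2; ...; w_l]
   (w_1 acts first). It is reduced if no letter is adjacent to its inverse. *)
Definition reduced (w : seq letter) : bool :=
  match w with
  | [::] => true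
  | a :: s => path (fun a b => ~~ inv_letter a b) a s
  end.

Definition traj (F : fieldType) (n : nat) (x y : 'M[F]_n) (w : seq letter)
  (v : 'cV[F]_n) (j : nat) : 'cV[F]_n :=
  foldl (fun u a => letter_mx x y a *m u) v (take j w).

(* Z_{i,0} = Span { v_{i',j'} : (i',j') lexicographically before (i,0) }
          = Span { v_{i',j'} : i' < i, 0 <= j' <= l }. *)
Definition Zspan (F : fieldType) (n m : nat) (x y : 'M[F]_n) (w : seq letter)
  (vs : {ffun 'I_m -> 'cV[F]_n}) (i : 'I_m) : {vspace 'cV[F]_n} :=
  <<[seq traj x y w (vs k.1) k.2
     | k : 'I_m * nat <- [seq (i', j) | i' <- enum 'I_m, j <- iota 0 (size w).+1] & (nat_of_ord k.1 < nat_of_ord i)%N]>>%VS.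

Definition S_set (p n m : nat) (w : seq letter) :
  {set 'M['F_p]_n * 'M['F_p]_n * {ffun 'I_m -> 'cV['F_p]_n}} :=
  [set t : 'M['F_p]_n * 'M['F_p]_n * {ffun 'I_m -> 'cV['F_p]_n} |
     let: (x, y, vs) := t in
     [&& x \in unitmx, y \in unitmx &
       [forall i : 'I_m,
          (vs i \notin Zspan x y w vs i) && (traj x y w (vs i) (size w) == vs i)]]].

From HB Require Import structures.
From mathcomp Require Import all_boot all_order all_algebra.
From mathcomp Require Import finfield zify.
Set Implicit Arguments. Unset Strict Implicit. Unset Printing Implicit Defensive.
Import GRing.Theory.

(* Reveal the trajectories v_{i,j} one vector at a time, recording each revealed
   image as a linear equation x u = c or y u = c.  If the domains of the
   equations on x and on y span subspaces of total dimension d, at most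
   p^(2n^2 - nd) pairs (x, y) satisfy them, so the number of solutions weighted
   by p^(nd) stays below p^(2n^2).  If w_j is already determined on v_{i,j-1},
   the next vector is forced.  Otherwise d grows by one: the weight gains p^n,
   which pays for choosing the next vector outside the current span, and since
   w is reduced that vector is again undetermined for the next letter.  So a
   run of new vectors goes on until it falls back into the span, of dimension s
   say, which offers at most p^s choices; over all steps this gives
   p^s + p^(s+1) + ... <= l p^(s+l).  A run that never falls back has its last
   vector forced by v_{i,l} = v_{i,0}, and the saved p^n pays for the choice of
   v_{i,0}.  Summing the exponents over the m cycles gives less than m^2 l. *)

Section SpanLemmas.
Variables (F : fieldType) (n : nat).
Local Notation V := 'cV[F]_n.
Local Notation M := 'M[F]_n.
Local Open Scope ring_scope.
Implicit Types (A B : M) (s : seq V) (U : {vspace V}).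

Lemma mulmx_eq_span A B s :
  {in s, forall v, A *m v = B *m v} -> {in <<s>>%VS, forall v, A *m v = B *m v}.
Proof.
move=> eqAB v; pose f := linfun (mulmx (A - B) : V -> V).
have /subvP sub_ker : (<<s>> <= lker f)%VS.
  by apply/span_subvP => u su; rewrite memv_ker lfunE /= mulmxBl subr_eq0 eqAB.
by move/sub_ker; rewrite memv_ker lfunE /= mulmxBl subr_eq0 => /eqP.
Qed.

Lemma mulmx_span A (L : seq (V * V)) :
  {in L, forall q, A *m q.1 = q.2} ->
  {in <<map fst L>>%VS, forall v, A *m v \in <<map snd L>>%VS}.
Proof.
move=> AL v Lv; pose f := linfun (mulmx A : V -> V).
have -> : map snd L = map f (map fst L).
  by rewrite -map_comp; apply/eq_in_map => q qL /=; rewrite lfunE /= AL.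
by rewrite -limg_span (_ : A *m v = f v) ?memv_img // lfunE.
Qed.

Lemma mx_eq_cV A B : (forall v : V, A *m v = B *m v) -> A = B.
Proof.
move=> eqAB; apply/matrixP => i j.
have := congr1 (fun v : V => v i 0) (eqAB (delta_mx j 0)).
by rewrite -!colE !mxE.
Qed.

Lemma dim_span_cons (c : V) s : (\dim <<s>> <= \dim <<c :: s>>)%N.
Proof. by rewrite span_cons dimvS // addvSr. Qed.

Lemma dim_span_cons_notin (c : V) s :
  c \notin <<s>>%VS -> \dim <<c :: s>> = (\dim <<s>>).+1.
Proof.
move=> cNs; rewrite span_cons; apply/eqP; rewrite eqn_leq; apply/andP; split.
  apply: leq_trans (dimv_add_leqif _ _) _.
  by rewrite dim_vline; case: (c != 0).
have /ltn_leqif -> := dimv_leqif_sup (addvSr <[c]> <<s>>).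
by rewrite subv_add subvv andbT -memvE.
Qed.

Lemma dim_addv_line U (c : V) k : (\dim U <= k)%N -> (\dim (U + <[c]>) <= k.+1)%N.
Proof.
move=> dimU; apply: leq_trans (dimv_add_leqif _ _) _.
rewrite dim_vline; case: (c != 0) => /=; lia.
Qed.

Lemma memv_addv_line U (c : V) : c \in (U + <[c]>)%VS.
Proof. by rewrite (subvP (addvSr _ _)) ?memv_line. Qed.

Lemma dimv_cV U : (\dim U <= n)%N.
Proof. by have := dimvS (subvf U); rewrite dimvf /dim /= muln1. Qed.

End SpanLemmas.

Section MatrixSolutions.
Variables (F : finFieldType) (n : nat).
Local Notation V := 'cV[F]_n.
Local Notation M := 'M[F]_n.
Local Open Scope ring_scope.

Lemma card_cV : #|{: V}| = (#|F| ^ n)%N.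
Proof. by rewrite card_mx muln1. Qed.

(* A matrix agreeing with the constraints L is determined by its values on a
   basis of a complement of the span of their domains. *)
Lemma card_mx_solutions (L : seq (V * V)) :
  (#|[set x : M | all (fun q => x *m q.1 == q.2) L]|
     * #|F| ^ (n * \dim <<map fst L>>) <= #|F| ^ (n * n))%N.
Proof.
set X := [set x : M | _]; set U := <<map fst L>>%VS.
pose b := vbasis (U^C)%VS.
pose f (x : M) := [ffun i : 'I_(\dim U^C) => x *m tnth b i].
have inj_f : {in X &, injective f}.
  move=> x x'; rewrite !inE => /allP Lx /allP Lx' /ffunP fxx'.
  have onUC : {in U^C%VS, forall v, x *m v = x' *m v}.
    rewrite -(span_basis (vbasisP U^C)); apply: mulmx_eq_span => _ /tnthP [i ->].
    by have := fxx' i; rewrite !ffunE.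
  have onU : {in U, forall v, x *m v = x' *m v}.
    apply: mulmx_eq_span => _ /mapP [q qL ->].
    by rewrite (eqP (Lx q qL)) (eqP (Lx' q qL)).
  apply: mx_eq_cV => v; have : v \in (U + U^C)%VS by rewrite addv_complf memvf.
  by case/memv_addP => u Uu [u' UCu' ->]; rewrite !mulmxDr onU // onUC.
have cardX : (#|X| <= (#|F| ^ n) ^ (n - \dim U))%N.
  rewrite -(card_in_imset inj_f); apply: leq_trans (max_card _) _.
  by rewrite card_ffun card_ord card_cV dimv_compl dimvf /dim /= muln1.
apply: leq_trans (leq_mul cardX (leqnn _)) _.
by rewrite -expnM -expnD -mulnDr subnK ?dimv_cV.
Qed.

End MatrixSolutions.

Section Constraints.
Variables (F : finFieldType) (n : nat).
Local Notation V := 'cV[F]_n.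
Local Notation M := 'M[F]_n.
Local Open Scope ring_scope.

(* (b, (u, c)) records the equation g u = c, where g is y if b else x. *)
Definition constraint := (bool * (V * V))%type.

Definition gen (xy : M * M) (b : bool) : M := if b then xy.2 else xy.1.

Definition solutions (Cs : seq constraint) : {set M * M} :=
  [set xy | [&& xy.1 \in unitmx, xy.2 \in unitmx &
            all (fun C : constraint => gen xy C.1 *m C.2.1 == C.2.2) Cs]].

Definition constraints_on (b : bool) (Cs : seq constraint) : seq (V * V) :=
  [seq C.2 | C <- Cs & C.1 == b].

Definition constraint_rank (Cs : seq constraint) : nat :=
  \dim <<map fst (constraints_on false Cs)>> + \dim <<map fst (constraints_on true Cs)>>.

(* An inverted letter a taking u to c is recorded as the equation g c = u. *)
Definition letter_constraint (a : letter) (u c : V) : constraint :=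
  if a.2 then (a.1, (c, u)) else (a.1, (u, c)).

Definition determined_space (Cs : seq constraint) (a : letter) : {vspace V} :=
  if a.2 then <<map snd (constraints_on a.1 Cs)>>%VS
  else <<map fst (constraints_on a.1 Cs)>>%VS.

Lemma solutions_constraints_on xy Cs b :
  xy \in solutions Cs -> {in constraints_on b Cs, forall q, gen xy b *m q.1 = q.2}.
Proof.
rewrite inE => /and3P [_ _ /allP solCs] q /mapP [C].
by rewrite mem_filter => /andP [/eqP <- CCs] ->; apply/eqP/solCs.
Qed.

Lemma solutions_unitmx xy Cs b : xy \in solutions Cs -> gen xy b \in unitmx.
Proof. by rewrite inE => /and3P [x_unit y_unit _]; case: b. Qed.

Lemma card_solutions Cs :
  (#|solutions Cs| * #|F| ^ (n * constraint_rank Cs) <= #|F| ^ (2 * n ^ 2))%N.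
Proof.
pose sols_on b := [set x : M | all (fun q => x *m q.1 == q.2) (constraints_on b Cs)].
have /subset_leq_card : solutions Cs \subset setX (sols_on false) (sols_on true).
  apply/subsetP => xy solxy; rewrite !inE.
  by apply/andP; split; apply/allP => q qCs; apply/eqP;
    apply: (solutions_constraints_on solxy qCs).
rewrite cardsX => card_le; apply: leq_trans (leq_mul card_le (leqnn _)) _.
have -> : (2 * n ^ 2 = n * n + n * n)%N by rewrite mul2n -addnn.
rewrite /constraint_rank mulnDr !expnD mulnACA.
by apply: leq_mul; apply: card_mx_solutions.
Qed.

Lemma solutions_cons xy a u c Cs :
  (xy \in solutions (letter_constraint a u c :: Cs)) =
  (xy \in solutions Cs) && (letter_mx xy.1 xy.2 a *m u == c).
Proof.
rewrite !inE /letter_constraint /letter_mx /gen; case: a => [a1 a2] /=.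
case: (boolP (xy.1 \in unitmx)) => //= x_unit.
case: (boolP (xy.2 \in unitmx)) => //= y_unit.
have g_unit : (if a1 then xy.2 else xy.1) \in unitmx by case: a1.
case: a2 => /=; rewrite andbC //; congr (_ && _).
by apply/eqP/eqP => [<-|<-]; rewrite ?mulKmx ?mulKVmx.
Qed.

Lemma constraints_on_cons a u c Cs b :
  constraints_on b (letter_constraint a u c :: Cs) =
  if a.1 == b then (letter_constraint a u c).2 :: constraints_on b Cs
  else constraints_on b Cs.
Proof.
have lc1 : (letter_constraint a u c).1 = a.1 by rewrite /letter_constraint; case: a.2.
by rewrite /constraints_on /= lc1; case: (a.1 == b).
Qed.

Lemma constraint_rank_cons a u c Cs :
  (constraint_rank Cs <= constraint_rank (letter_constraint a u c :: Cs))%N.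
Proof.
by rewrite /constraint_rank !constraints_on_cons; case: a => [[] a2] /=;
  apply: leq_add => //; apply: dim_span_cons.
Qed.

(* For an inverted letter the new domain is c, and c in the old domains would
   put u = g^-1 c in the determined space. *)
Lemma constraint_rank_cons_new a u c Cs xy :
  u \notin determined_space Cs a -> xy \in solutions (letter_constraint a u c :: Cs) ->
  constraint_rank (letter_constraint a u c :: Cs) = (constraint_rank Cs).+1.
Proof.
case: a => a1 a2 uNdet; rewrite solutions_cons => /andP [solCs act_u].
have new_dom : (letter_constraint (a1, a2) u c).2.1
                 \notin <<map fst (constraints_on a1 Cs)>>%VS.
  case: a2 uNdet act_u => //= uNdet /eqP act_u; apply: contra uNdet => c_dom.
  have := mulmx_span (solutions_constraints_on (b := a1) solCs) c_dom.
  rewrite -act_u /letter_mx /=.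
  by rewrite mulKVmx //; apply: (solutions_unitmx a1 solCs).
move: new_dom {uNdet act_u}; rewrite /constraint_rank !constraints_on_cons.
by case: a1 => /= new_dom; rewrite (dim_span_cons_notin new_dom) ?addnS ?addSn.
Qed.

Lemma letter_mx_determined a u Cs xy xy' :
  u \in determined_space Cs a -> xy \in solutions Cs -> xy' \in solutions Cs ->
  letter_mx xy.1 xy.2 a *m u = letter_mx xy'.1 xy'.2 a *m u.
Proof.
move=> u_det solxy solxy'.
have eqxy := solutions_constraints_on (b := a.1) solxy.
have eqxy' := solutions_constraints_on (b := a.1) solxy'.
have xy_unit := solutions_unitmx a.1 solxy.
have xy'_unit := solutions_unitmx a.1 solxy'.
move: u_det; rewrite /determined_space /letter_mx -/(gen xy a.1) -/(gen xy' a.1).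
case: a.2 => u_det; apply: (mulmx_eq_span _ u_det) => _ /mapP [q qCs ->].
  by rewrite -{1}(eqxy q qCs) -(eqxy' q qCs) !mulKmx.
by rewrite eqxy ?eqxy'.
Qed.

End Constraints.

Section FfunCons.
Variable T : finType.

Definition ffcons k (v : T) (vs : {ffun 'I_k -> T}) : {ffun 'I_k.+1 -> T} :=
  [ffun i => if unlift ord0 i is Some j then vs j else v].

Lemma ffcons0 k v (vs : {ffun 'I_k -> T}) : ffcons v vs ord0 = v.
Proof. by rewrite ffunE unlift_none. Qed.

Lemma ffcons_lift k v (vs : {ffun 'I_k -> T}) j : ffcons v vs (lift ord0 j) = vs j.
Proof. by rewrite ffunE liftK. Qed.

Lemma card_ffcons k (A : {set {ffun 'I_k.+1 -> T}}) :
  #|A| = \sum_(v : T) #|[set vs | ffcons v vs \in A]|.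
Proof.
rewrite -sum1_card (eq_bigr (fun v => \sum_(vs in [set vs | ffcons v vs \in A]) 1));
  last by move=> v _; rewrite sum1_card.
rewrite pair_big_dep /= (reindex (fun pr => ffcons pr.1 pr.2)) /=.
  by apply: eq_bigl => -[v vs]; rewrite inE.
exists (fun vs => (vs ord0, [ffun j => vs (lift ord0 j)])) => [[v vs] _ | vs _] /=.
  by rewrite ffcons0; congr (_, _); apply/ffunP => j; rewrite ffunE ffcons_lift.
by apply/ffunP => i; rewrite ffunE; case: (unliftP ord0 i) => [j ->|->]; rewrite ?ffunE.
Qed.

End FfunCons.

Lemma forall_ordS k (P : pred 'I_k.+1) :
  [forall i, P i] = P ord0 && [forall j : 'I_k, P (lift ord0 j)].
Proof.
apply/forallP/andP => [Pi | [P0 /forallP Plift] i].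
  by split; [apply: Pi | apply/forallP => j; apply: Pi].
by case: (unliftP ord0 i) => [j ->|->].
Qed.

Section CycleCounts.
Variables (F : finFieldType) (n : nat) (w : seq letter).
Local Notation V := 'cV[F]_n.
Local Notation M := 'M[F]_n.
Local Open Scope ring_scope.

Definition letter_act (xy : M * M) (a : letter) (u : V) : V := letter_mx xy.1 xy.2 a *m u.

Definition word_act (xy : M * M) (ws : seq letter) (u : V) : V :=
  traj xy.1 xy.2 ws u (size ws).

Definition orbit (xy : M * M) (ws : seq letter) (u : V) : seq V :=
  [seq traj xy.1 xy.2 ws u j | j <- iota 1 (size ws)].

Definition trajectory (x y : M) (u : V) : seq V :=
  [seq traj x y w u j | j <- iota 0 (size w).+1].

Definition free_cycles k (xy : M * M) (U : {vspace V}) : {set {ffun 'I_k -> V}} :=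
  [set vs : {ffun 'I_k -> V} | [forall i, (vs i \notin (U + Zspan xy.1 xy.2 w vs i)%VS)
                       && (word_act xy w (vs i) == vs i)]].

(* Counts at an intermediate stage of the revealing process: Cs holds the
   revealed images and U the span of the revealed vectors; count_paths is in
   the middle of a trajectory, at u with ws still to read, heading for t. *)
Definition count_cycles (Cs : seq (constraint F n)) (U : {vspace V}) k : nat :=
  (\sum_(xy in solutions Cs) #|free_cycles k xy U|)%N.

Definition count_paths (Cs : seq (constraint F n)) (U : {vspace V}) (u : V)
    (ws : seq letter) (t : V) k : nat :=
  (\sum_(xy in solutions Cs | word_act xy ws u == t)
     #|free_cycles k xy (U + <<orbit xy ws u>>)%VS|)%N.

Lemma traj0 x y ws (u : V) : traj x y ws u 0 = u.
Proof. by rewrite /traj take0. Qed.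

Lemma traj_cons x y a ws (u : V) j :
  traj x y (a :: ws) u j.+1 = traj x y ws (letter_mx x y a *m u) j.
Proof. by []. Qed.

Lemma orbit_cons xy a ws u :
  orbit xy (a :: ws) u = letter_act xy a u :: orbit xy ws (letter_act xy a u).
Proof.
rewrite /orbit /= traj_cons traj0; congr (_ :: _).
by rewrite -[2%N]/(1 + 1)%N iotaDl -map_comp; apply: eq_map => j /=; rewrite add1n traj_cons.
Qed.

Lemma word_act_cons xy a ws u : word_act xy (a :: ws) u = word_act xy ws (letter_act xy a u).
Proof. by []. Qed.

Lemma count_paths_cons Cs U u a ws t k :
  count_paths Cs U u (a :: ws) t k =
  (\sum_c count_paths (letter_constraint a u c :: Cs) (U + <[c]>)%VS c ws t k)%N.
Proof.
rewrite /count_paths (partition_big (fun xy => letter_act xy a u) xpredT) //=.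
apply: eq_bigr => c _; apply: eq_big => [xy|xy /andP [/andP [_ _] /eqP act_u]].
  rewrite solutions_cons word_act_cons -/(letter_act xy a u).
  by case: (letter_act xy a u =P c) => [->|]; rewrite ?andbT ?andbF.
by rewrite orbit_cons act_u span_cons addvA.
Qed.

Lemma count_paths_nil Cs U u t k :
  count_paths Cs U u [::] t k = ((u == t) * count_cycles Cs U k)%N.
Proof.
rewrite /count_paths /count_cycles /orbit /word_act /= span_nil addv0.
under eq_bigl => xy do rewrite traj0.
case: eqP => _; last by rewrite mul0n big_pred0 // => xy; rewrite andbF.
by rewrite mul1n; apply: eq_bigl => xy; rewrite andbT.
Qed.

Lemma mem_Zspan_seq k x y (vs : {ffun 'I_k -> V}) (i : 'I_k) (z : V) :
  z \in [seq traj x y w (vs kk.1) kk.2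
          | kk : 'I_k * nat <- [seq (i', j) | i' <- enum 'I_k, j <- iota 0 (size w).+1]
          & (nat_of_ord kk.1 < nat_of_ord i)%N] =
  [exists i' : 'I_k, (i' < i)%N && (z \in trajectory x y (vs i'))].
Proof.
apply/idP/existsP.
  case/mapP => kk; rewrite mem_filter => /andP [lt /flatten_mapP [i' _ /mapP [j jI E]]] ->.
  by rewrite E /= in lt *; exists i'; rewrite lt /=; apply: map_f.
case=> i' /andP [lt /mapP [j jI ->]]; apply/mapP; exists (i', j) => //.
rewrite mem_filter lt /=; apply/flatten_mapP; exists i'; first by rewrite mem_enum.
exact: (map_f (fun j0 => (i', j0)) jI).
Qed.

Lemma Zspan_ffcons0 k x y v (vs : {ffun 'I_k -> V}) :
  Zspan x y w (ffcons v vs) ord0 = 0%VS.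
Proof.
rewrite /Zspan -span_nil; apply: eq_span => z; rewrite mem_Zspan_seq in_nil.
by apply/existsP => [[i' /andP []]].
Qed.

Lemma Zspan_ffcons_lift k x y v (vs : {ffun 'I_k -> V}) j :
  Zspan x y w (ffcons v vs) (lift ord0 j) = (<<trajectory x y v>> + Zspan x y w vs j)%VS.
Proof.
rewrite /Zspan -span_cat; apply: eq_span => z; rewrite mem_cat !mem_Zspan_seq.
apply/existsP/orP => [[i' /andP [lt z_i']]|].
  move: lt z_i'; case: (unliftP ord0 i') => [i'' ->|->]; last by rewrite ffcons0; left.
  by rewrite ffcons_lift !lift0 ltnS => lt z_i''; right; apply/existsP; exists i''; rewrite lt.
case=> [z_v | /existsP [i'' /andP [lt z_i'']]].
  by exists ord0; rewrite ffcons0 z_v lift0 andbT.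
by exists (lift ord0 i''); rewrite ffcons_lift z_i'' !lift0 ltnS lt.
Qed.

Lemma trajectoryE xy u : trajectory xy.1 xy.2 u = u :: orbit xy w u.
Proof. by rewrite /trajectory /orbit /= traj0. Qed.

Lemma card_free_cycles_succ k xy U :
  #|free_cycles k.+1 xy U| = (\sum_(v | v \notin U)
     if word_act xy w v == v then #|free_cycles k xy (U + <[v]> + <<orbit xy w v>>)%VS|
     else 0)%N.
Proof.
rewrite (card_ffcons (free_cycles k.+1 xy U)) [RHS]big_mkcond /=.
apply: eq_bigr => v _.
set U' := (U + <[v]> + <<orbit xy w v>>)%VS.
have -> : [set vs | ffcons v vs \in free_cycles k.+1 xy U] =
    if (v \notin U) && (word_act xy w v == v) then free_cycles k xy U' else set0.
  apply/setP => vs; rewrite !inE forall_ordS ffcons0 Zspan_ffcons0 addv0.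
  case: (v \notin U) (word_act xy w v == v) => [] [] //=; rewrite ?inE //.
  apply: eq_forallb => j; rewrite ffcons_lift Zspan_ffcons_lift.
  by rewrite /U' trajectoryE span_cons !addvA.
by case: (v \notin U) (word_act xy w v == v) => [] [] //=; rewrite cards0.
Qed.

Lemma card_free_cycles0 xy U : #|free_cycles 0 xy U| = 1%N.
Proof.
rewrite (_ : free_cycles 0 xy U = setT) ?cardsT ?card_ffun ?card_ord //.
by apply/setP => vs; rewrite !inE; apply/forallP => -[].
Qed.

Lemma count_cycles_succ Cs U k :
  count_cycles Cs U k.+1 = (\sum_(v | v \notin U) count_paths Cs (U + <[v]>)%VS v w v k)%N.
Proof.
rewrite /count_cycles /count_paths.
under eq_bigr => xy _ do rewrite card_free_cycles_succ.
by rewrite exchange_big /=; apply: eq_bigr => v _; rewrite big_mkcondr.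
Qed.

End CycleCounts.

Section SupportedConstraints.
Variables (F : finFieldType) (n : nat).
Local Notation V := 'cV[F]_n.
Implicit Types (Cs : seq (constraint F n)) (U : {vspace V}).

Definition supported Cs U := all (fun C : constraint F n => (C.2.1 \in U) && (C.2.2 \in U)) Cs.

Lemma supportedS Cs U U' : supported Cs U -> (U <= U')%VS -> supported Cs U'.
Proof.
move=> /allP CsU /subvP UU'; apply/allP => C CCs.
by case/andP: (CsU C CCs) => /UU' -> /UU' ->.
Qed.

Lemma supported_cons Cs U a u c : supported Cs U -> u \in U ->
  supported (letter_constraint a u c :: Cs) (U + <[c]>)%VS.
Proof.
move=> CsU uU; rewrite /supported /= -/(supported Cs _) (supportedS CsU (addvSl _ _)).
have uU' : u \in (U + <[c]>)%VS by rewrite (subvP (addvSl _ _)).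
by rewrite /letter_constraint; case: a.2; rewrite /= uU' memv_addv_line.
Qed.

Lemma supported_constraints_on Cs U b : supported Cs U ->
  {in constraints_on b Cs, forall q, (q.1 \in U) && (q.2 \in U)}.
Proof.
by move=> /allP CsU q /mapP [C]; rewrite mem_filter => /andP [_ CCs] ->; apply: CsU.
Qed.

Lemma determined_space_supported Cs U a : supported Cs U -> (determined_space Cs a <= U)%VS.
Proof.
move/(supported_constraints_on (b := a.1)) => CsU; rewrite /determined_space.
by case: a.2; apply/span_subvP => _ /mapP [q qCs ->]; case/andP: (CsU q qCs).
Qed.

(* The image c of u under a enters the space determined for b only if b undoes a:
   this is where reducedness of the word is used. *)
Lemma determined_space_cons Cs U a b u c : supported Cs U -> u \in U ->
  ~~ inv_letter a b -> (determined_space (letter_constraint a u c :: Cs) b <= U)%VS.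
Proof.
move=> CsU uU ab_red; have CsbU := supported_constraints_on (b := b.1) CsU.
rewrite /determined_space constraints_on_cons.
have [ab1|_] := eqVneq a.1 b.1; last first.
  by case: b.2; apply/span_subvP => _ /mapP [q qCs ->]; case/andP: (CsbU q qCs).
move: ab_red; rewrite /inv_letter ab1 eqxx negbK => /eqP ab2.
rewrite /letter_constraint ab2; case: b.2 => /=; apply/span_subvP => z;
  by rewrite inE => /orP [/eqP -> // | /mapP [q qCs ->]]; case/andP: (CsbU q qCs).
Qed.

End SupportedConstraints.

Fixpoint cycles_exponent (l s k : nat) : nat :=
  if k is k'.+1 then s + l + cycles_exponent l (s + l.+2) k' else 0.

Lemma cycles_exponentE l s k :
  2 * cycles_exponent l s k + k * (l + 2) = 2 * k * s + 2 * k * l + k * k * (l + 2).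
Proof. by elim: k s => [|k IH] s /=; [rewrite !muln0 !mul0n | have := IH (s + l.+2); nia]. Qed.

Lemma cycles_exponent_lt l m : 0 < m -> cycles_exponent l 0 m < m ^ 2 * l.+1.
Proof.
move=> m_pos; have := cycles_exponentE l 0 m; rewrite muln0 add0n => expE.
by rewrite -(ltn_pmul2l (isT : 0 < 2)) expnS expn1; nia.
Qed.

Section CountBounds.
Variables (F : finFieldType) (n : nat) (w : seq letter).
Local Notation V := 'cV[F]_n.
Local Notation q := #|F|.
Local Notation weight Cs := (q ^ (n * constraint_rank Cs)).
Local Notation card_pairs := (q ^ (2 * n ^ 2)).
Implicit Types (Cs : seq (constraint F n)) (U : {vspace V}).

(* [run_bound r s] bounds a run of new vectors with r letters left, started
   from a span of dimension s: the run may fall back into the span after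
   i more steps (q ^ (s + i) choices), or stay new up to the closing letter,
   whose image is then forced. *)
Fixpoint run_bound (r s : nat) : nat := if r is r'.+1 then q ^ s + run_bound r' s.+1 else 1.

Fixpoint cycles_bound (k s : nat) : nat :=
  if k is k'.+1 then run_bound (size w).-1 s.+1 * cycles_bound k' (s.+1 + size w) else 1.

Definition count_cycles_bounded k := forall Cs U s, supported Cs U -> \dim U <= s ->
  count_cycles w Cs U k * weight Cs <= card_pairs * cycles_bound k s.

Lemma card_F_gt0 : 0 < q.
Proof. by apply/card_gt0P; exists 0%R. Qed.

Lemma count_paths_unsolvable Cs U u ws t k :
  solutions Cs = set0 -> count_paths w Cs U u ws t k = 0.
Proof. by move=> noSol; rewrite /count_paths big_pred0 // => xy; rewrite noSol inE. Qed.

Lemma count_paths_weight_cons Cs U a u c ws t k : u \notin determined_space Cs a ->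
  count_paths w (letter_constraint a u c :: Cs) U c ws t k * weight Cs * q ^ n <=
  count_paths w (letter_constraint a u c :: Cs) U c ws t k
    * weight (letter_constraint a u c :: Cs).
Proof.
move=> uNdet; have [noSol|[xy solxy]] := set_0Vmem (solutions (letter_constraint a u c :: Cs)).
  by rewrite count_paths_unsolvable.
by rewrite (constraint_rank_cons_new uNdet solxy) mulnS expnD -mulnA [q ^ (n * _) * _]mulnC.
Qed.

Lemma count_paths_cons_determined Cs U u a ws t k xy0 :
  u \in determined_space Cs a -> xy0 \in solutions Cs ->
  count_paths w Cs U u (a :: ws) t k =
  count_paths w (letter_constraint a u (letter_act xy0 a u) :: Cs)
    (U + <[letter_act xy0 a u]>)%VS (letter_act xy0 a u) ws t k.
Proof.
move=> u_det solxy0; rewrite count_paths_cons (bigD1 (letter_act xy0 a u)) //=.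
rewrite big1 ?addn0 // => c' c'Nc.
apply: count_paths_unsolvable; apply/setP => xy.
rewrite solutions_cons in_set0; apply/andP => -[solxy /eqP act_u]; move: c'Nc.
by rewrite -act_u (letter_mx_determined u_det solxy solxy0) eqxx.
Qed.

Section PathBounds.
Variable k : nat.
Hypothesis cycles_k : count_cycles_bounded k.

Lemma count_paths_bound ws Cs U u t s :
  supported Cs U -> u \in U -> \dim U <= s ->
  count_paths w Cs U u ws t k * weight Cs <= card_pairs * cycles_bound k (s + size ws).
Proof.
elim: ws Cs U u s => [|a ws IH] Cs U u s CsU uU dimU.
  rewrite count_paths_nil addn0 -mulnA; apply: leq_trans (cycles_k CsU dimU).
  by case: (u == t); rewrite ?mul1n ?mul0n.
have IHc c : count_paths w (letter_constraint a u c :: Cs) (U + <[c]>)%VS c ws t k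
    * weight (letter_constraint a u c :: Cs) <= card_pairs * cycles_bound k (s + size (a :: ws)).
  rewrite /= -addSnnS; apply: IH; rewrite ?memv_addv_line ?dim_addv_line //.
  exact: supported_cons.
have [noSol|[xy0 solxy0]] := set_0Vmem (solutions Cs).
  by rewrite count_paths_unsolvable.
have [u_det|uNdet] := boolP (u \in determined_space Cs a).
  rewrite (count_paths_cons_determined U ws t k u_det solxy0).
  apply: leq_trans (IHc (letter_act xy0 a u)); rewrite leq_mul2l leq_pexp2l ?orbT ?card_F_gt0 //.
  by rewrite leq_mul2l constraint_rank_cons orbT.
rewrite count_paths_cons.
rewrite -(@leq_pmul2r (q ^ n)) ?expn_gt0 ?card_F_gt0 // !big_distrl /=.
apply: leq_trans (leq_sum _ (fun c _ => count_paths_weight_cons (U + <[c]>)%VS c ws t k uNdet)) _.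
apply: leq_trans (leq_sum _ (fun c _ => IHc c)) _.
by rewrite sum_nat_const card_cV mulnC.
Qed.

Lemma count_paths_new_last a Cs U u t s :
  supported Cs U -> u \in U -> \dim U <= s -> u \notin determined_space Cs a ->
  count_paths w Cs U u [:: a] t k * weight Cs * q ^ n <= card_pairs * cycles_bound k s.+1.
Proof.
move=> CsU uU dimU uNdet.
rewrite count_paths_cons !big_distrl (bigD1 t) //= big1 ?addn0; last first.
  by move=> c ct; rewrite count_paths_nil (negbTE ct) !mul0n.
apply: leq_trans (count_paths_weight_cons _ _ _ _ _ uNdet) _.
rewrite -[s.+1]addn0; apply: count_paths_bound; rewrite ?memv_addv_line ?dim_addv_line //.
exact: supported_cons.
Qed.

Lemma count_paths_new_in_span a ws Cs U u t s :
  supported Cs U -> u \in U -> \dim U <= s -> u \notin determined_space Cs a ->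
  \sum_(c | c \in U)
     count_paths w (letter_constraint a u c :: Cs) (U + <[c]>)%VS c ws t k * weight Cs * q ^ n
  <= card_pairs * cycles_bound k (s + size (a :: ws)) * q ^ s.
Proof.
move=> CsU uU dimU uNdet.
have bound_c c : count_paths w (letter_constraint a u c :: Cs) (U + <[c]>)%VS c ws t k
    * weight Cs * q ^ n <= card_pairs * cycles_bound k (s + size (a :: ws)).
  apply: leq_trans (count_paths_weight_cons _ _ _ _ _ uNdet) _.
  rewrite /= -addSnnS; apply: count_paths_bound; rewrite ?memv_addv_line ?dim_addv_line //.
  exact: supported_cons.
apply: leq_trans (leq_sum _ (fun c _ => bound_c c)) _.
by rewrite sum_nat_const card_vspace mulnC leq_mul2l leq_pexp2l ?orbT ?card_F_gt0.
Qed.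

Lemma count_paths_new_bound ws a Cs U u t s :
  supported Cs U -> u \in U -> \dim U <= s ->
  path (fun a b => ~~ inv_letter a b) a ws -> u \notin determined_space Cs a ->
  count_paths w Cs U u (a :: ws) t k * weight Cs * q ^ n
    <= card_pairs * cycles_bound k (s + size (a :: ws)) * run_bound (size ws) s.
Proof.
elim: ws a Cs U u s => [|b ws IH] a Cs U u s CsU uU dimU.
  by move=> _ uNdet; rewrite muln1 addn1; apply: count_paths_new_last.
move=> /= /andP [ab_red bws_red] uNdet.
rewrite count_paths_cons !big_distrl (bigID (fun c => c \in U)) /= mulnDr.
rewrite leq_add ?count_paths_new_in_span //.
rewrite -(@leq_pmul2r (q ^ n)) ?expn_gt0 ?card_F_gt0 // big_distrl /=.
have bound_c c : c \notin U ->
  count_paths w (letter_constraint a u c :: Cs) (U + <[c]>)%VS c (b :: ws) t k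
    * weight Cs * q ^ n * q ^ n
  <= card_pairs * cycles_bound k (s + size [:: a, b & ws]) * run_bound (size ws) s.+1.
  move=> cNU; apply: (@leq_trans (count_paths w (letter_constraint a u c :: Cs)
      (U + <[c]>)%VS c (b :: ws) t k * weight (letter_constraint a u c :: Cs) * q ^ n)).
    by rewrite leq_mul2r count_paths_weight_cons ?orbT.
  rewrite /= -addSnnS; apply: IH; rewrite ?memv_addv_line ?dim_addv_line //.
    exact: supported_cons.
  by apply: contra cNU; apply/subvP/(determined_space_cons c CsU uU ab_red).
apply: leq_trans (leq_sum _ bound_c) _.
rewrite sum_nat_const mulnC leq_mul2l; apply/orP; right.
by apply: leq_trans (max_card _) _; rewrite card_cV.
Qed.

End PathBounds.

Lemma count_cycles_boundedP : reduced w -> 0 < size w -> forall k, count_cycles_bounded k.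
Proof.
move=> w_red w_pos; elim=> [|k IHk] Cs U s CsU dimU.
  rewrite /count_cycles; under eq_bigr => xy _ do rewrite card_free_cycles0.
  by rewrite sum1_card muln1 card_solutions.
have [a [ws w_eq]] : exists a ws, w = a :: ws by case: w w_pos => // a ws; exists a, ws.
have bound_v v : v \notin U -> count_paths w Cs (U + <[v]>)%VS v w v k * weight Cs * q ^ n
    <= card_pairs * cycles_bound k.+1 s.
  move=> vNU; have -> : cycles_bound k.+1 s =
      run_bound (size ws) s.+1 * cycles_bound k (s.+1 + size (a :: ws)) by rewrite /= w_eq.
  rewrite [run_bound _ _ * _]mulnC mulnA [X in count_paths _ _ _ _ X]w_eq.
  apply: count_paths_new_bound; rewrite ?memv_addv_line ?dim_addv_line -?w_eq //.
  - exact: supportedS CsU (addvSl _ _).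
  - by move: w_red; rewrite w_eq.
  - by apply: contra vNU; apply/subvP/determined_space_supported.
rewrite count_cycles_succ -(@leq_pmul2r (q ^ n)) ?expn_gt0 ?card_F_gt0 // !big_distrl /=.
apply: leq_trans (leq_sum _ bound_v) _.
rewrite sum_nat_const mulnC leq_mul2l; apply/orP; right.
by apply: leq_trans (max_card _) _; rewrite card_cV.
Qed.

Lemma run_bound_leq r s : run_bound r s.+1 <= r.+1 * q ^ (s + r).
Proof.
elim: r s => [|r IH] s /=; first by rewrite mul1n addn0 expn_gt0 card_F_gt0.
have le_run := IH s.+1; rewrite addSnnS in le_run.
have le_head : q ^ s.+1 <= q ^ (s + r.+1) by rewrite leq_pexp2l ?card_F_gt0 // addnS ltnS leq_addr.
move: le_run le_head; move: (q ^ s.+1) (run_bound r s.+2) (q ^ (s + r.+1)); lia.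
Qed.

Lemma cycles_bound_leq k s : 0 < size w ->
  cycles_bound k s <= size w ^ k * q ^ (cycles_exponent (size w).-1 s k).
Proof.
move=> w_pos; elim: k s => [|k IH] s /=; first by rewrite expn0 mul1n.
have -> : s.+1 + size w = s + (size w).-1.+2 by rewrite -addSnnS prednK.
apply: leq_trans (leq_mul (run_bound_leq _ s) (IH _)) _.
by rewrite prednK // expnS (expnD q (s + (size w).-1)) mulnACA.
Qed.

End CountBounds.

Lemma card_S_set p n m w :
  #|S_set p n m w| = count_cycles (F := 'F_p) (n := n) w [::] 0%VS m.
Proof.
have S_setE xy vs : ((xy, vs) \in S_set p n m w) =
    (xy \in solutions [::]) && (vs \in free_cycles w m xy 0%VS).
  case: xy => x y; rewrite !inE /= andbT -andbA.
  by do 2!congr (_ && _); apply: eq_forallb => i; rewrite add0v.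
rewrite -sum1_card (eq_bigl (fun t => true && ((t.1, t.2) \in S_set p n m w))); last first.
  by case.
rewrite -(pair_big_dep xpredT (fun xy vs => (xy, vs) \in S_set p n m w) (fun _ _ => 1%N)) /=.
rewrite /count_cycles [RHS]big_mkcond; apply: eq_bigr => xy _.
under eq_bigl => vs do rewrite S_setE.
by case: (xy \in solutions [::]); rewrite ?big_pred0_eq // sum1_card.
Qed.

Theorem proposition3p13 (w : seq letter) (n m p : nat) :
  prime p -> reduced w -> (0 < size w)%N -> (0 < m)%N ->
  (2 * m * size w <= n)%N ->
  (#|S_set p n m w| < (size w) ^ m * p ^ (2 * n ^ 2 + m ^ 2 * size w))%N.
Proof.
move=> p_prime w_red w_pos m_pos _; have p_gt1 := prime_gt1 p_prime.
have := @count_cycles_boundedP 'F_p n w w_red w_pos m [::] 0%VS 0 isT (eq_leq (dimv0 _)).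
have rank0 : constraint_rank ([::] : seq (constraint 'F_p n)) = 0.
  by rewrite /constraint_rank /constraints_on /= span_nil dimv0.
rewrite -card_S_set rank0 muln0 expn0 muln1 card_Fp // => /leq_ltn_trans; apply.
rewrite expnD mulnCA ltn_pmul2l ?expn_gt0 ?(ltnW p_gt1) //.
apply: leq_ltn_trans (cycles_bound_leq _ _ _ w_pos) _; rewrite card_Fp //.
rewrite ltn_pmul2l ?expn_gt0 ?w_pos // ltn_exp2l //.
by rewrite -[size w in X in (_ < X)%N](prednK w_pos) cycles_exponent_lt.
Qed.
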